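(* Let $c,h,l,\alpha,\beta,c_1,h_1,l_1,\alpha_1,\beta_1\in\mathbb{C}$ and $\gamma,\gamma_1\in\mathbb{C}^*$. Then: (1) $L(c,h,l)\otimes A'(\alpha,\beta)^{\mathcal{D}}\cong L(c_1,h_1,l_1)\otimes A'(\alpha_1,\beta_1)^{\mathcal{D}}$ as $\mathcal{D}$-modules if and only if $(c,h,l)=(c_1,h_1,l_1)$, $\alpha-\alpha_1\in\mathbb{Z}$, and either $\beta=\beta_1$ or $\{\beta,\beta_1\}=\{0,-1\}$. (2) $L(c,h,l)\otimes A(\alpha,\beta,\gamma)\cong L(c_1,h_1,l_1)\otimes A(\alpha_1,\beta_1,\gamma_1)$ if and only if $(\beta,\gamma,c,h,l)=(\beta_1,\gamma_1,c_1,h_1,l_1)$ and $\alpha-\alpha_1\in\frac12\mathbb{Z}$. (3) $L(c,h,l)\otimes A(\alpha,\beta,\gamma)\not\cong L(c_1,h_1,l_1)\otimes A'(\alpha_1,\beta_1)^{\mathcal{D}}$.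
   Context: The mirror-twisted Heisenberg–Virasoro algebra $\mathcal{D}$ is the complex Lie algebra with basis $\{d_m,h_r,\mathbf{c},\mathbf{l}: m\in\mathbb{Z}, r\in\frac12+\mathbb{Z}\}$ and brackets $[d_m,d_n]=(m-n)d_{m+n}+\frac{m^3-m}{12}\delta_{m+n,0}\mathbf{c}$, $[d_m,h_r]=-rh_{m+r}$, $[h_r,h_s]=r\delta_{r+s,0}\mathbf{l}$, with $\mathbf{c},\mathbf{l}$ central. $\mathcal{V}=\mathrm{span}\{d_m,\mathbf{c}\}$ (Virasoro algebra), $\mathcal{H}=\mathrm{span}\{h_r,\mathbf{l}\}$. $\mathcal{D}^{+}=\mathrm{span}\{d_{n},h_{r}: n\in\mathbb{N}, r\in\frac12+\mathbb{Z}_{\ge0}\}$, $\mathcal{D}^0=\mathrm{span}\{d_0,\mathbf{c},\mathbf{l}\}$. $L(c,h,l)$ is the irreducible quotient of the Verma module $M(c,h,l)=U(\mathcal{D})\otimes_{U(\mathcal{D}^0\oplus\mathcal{D}^+)}\mathbb{C}\mathbf{1}$, where $d_0\mathbf{1}=h\mathbf{1}$, $\mathbf{c}\mathbf{1}=c\mathbf{1}$, $\mathbf{l}\mathbf{1}=l\mathbf{1}$, $\mathcal{D}^+\mathbf{1}=0$. $A(\alpha,\beta,\gamma)$ is the $\mathcal{D}$-module with basis $\{v_k:k\in\frac12\mathbb{Z}\}$ and $d_mv_k=(\alpha+\beta m-k)v_{m+k}$, $h_rv_n=v_{n+r}$ for $n\in\mathbb{Z}$, $h_rv_s=\gamma v_{r+s}$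 for $s\in\frac12+\mathbb{Z}$, $\mathbf{c},\mathbf{l}$ acting as $0$. $A(\alpha,\beta)$ is the $\mathcal{V}$-module with basis $\{v_k:k\in\mathbb{Z}\}$, $d_mv_k=(\alpha+\beta m-k)v_{m+k}$, $\mathbf{c}=0$; $A'(\alpha,\beta)$ is its unique nontrivial irreducible subquotient. For a $\mathcal{V}$-module $V$, $V^{\mathcal{D}}$ is $V$ with $\mathcal{H}$ acting as $0$. Tensor products carry the action $x(v\otimes w)=xv\otimes w+v\otimes xw$. *)

From HB Require Import structures.
From mathcomp Require Import all_boot all_order all_algebra.
From mathcomp Require Import boolp classical_sets functions.
From mathcomp Require Import complex.
From mathcomp Require Import Rstruct.

Set Implicit Arguments.
Unset Strict Implicit.
Unset Printing Implicit Defensive.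

Import GRing.Theory Num.Theory.
Local Open Scope ring_scope.

Definition C : numClosedFieldType := (Rdefinitions.R)[i].

(** * Actions of the mirror-twisted Heisenberg-Virasoro algebra D.
    Basis of D: d_m (m : int), h_r (r in 1/2 + Z), c, l.
    Convention: [hop k] is the operator of h_(k + 1/2), k : int. *)
Record Dact (V : lmodType C) := DAct {
  dop : int -> V -> V;
  hop : int -> V -> V;
  cop : V -> V;
  lop : V -> V
}.

Definition half (k : int) : C := k%:~R + 2^-1.

Definition comm (V : lmodType C) (x y : V -> V) (v : V) : V := x (y v) - y (x v).

Definition is_Dmodule (V : lmodType C) (a : Dact V) : Prop :=
  [/\ (forall m, linear (dop a m)), (forall k, linear (hop a k)),
      linear (cop a), linear (lop a) &
  [/\
      (forall (m n : int) v, comm (dop a m) (dop a n) v =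
         (m - n)%:~R *: dop a (m + n) v
         + (if m + n == 0 then ((m ^+ 3 - m)%:~R / 12%:R) *: cop a v else 0)),
      (forall (m k : int) v, comm (dop a m) (hop a k) v =
         - half k *: hop a (m + k) v),
      (forall (k j : int) v, comm (hop a k) (hop a j) v =
         (if k + j + 1 == 0 then half k *: lop a v else 0)),
      (forall m v, comm (cop a) (dop a m) v = 0) /\ (forall k v, comm (cop a) (hop a k) v = 0) &
      [/\ (forall m v, comm (lop a) (dop a m) v = 0), (forall k v, comm (lop a) (hop a k) v = 0)
        & (forall v, comm (cop a) (lop a) v = 0)]]].

Definition is_Dsubmodule (V : lmodType C) (a : Dact V) (W : V -> Prop) : Prop :=
  [/\ W 0, (forall u v, W u -> W v -> W (u + v)), (forall (z : C) v, W v -> W (z *: v)),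
      (forall m v, W v -> W (dop a m v)) &
      [/\ (forall k v, W v -> W (hop a k v)), (forall v, W v -> W (cop a v))
        & (forall v, W v -> W (lop a v))]].

Definition irreducible_Dmod (V : lmodType C) (a : Dact V) : Prop :=
  (exists v : V, v != 0) /\
  forall W, is_Dsubmodule a W -> (forall v, W v -> v = 0) \/ (forall v, W v).

Definition hw_vector (V : lmodType C) (a : Dact V) (c h l : C) (v : V) : Prop :=
  [/\ v != 0, dop a 0 v = h *: v, cop a v = c *: v, lop a v = l *: v &
      (forall n : int, 0 < n -> dop a n v = 0) /\ (forall k : int, 0 <= k -> hop a k v = 0)].

(** Such a module is generated by that vector, hence is the
    irreducible quotient of the Verma module M(c,h,l). *)
Definition is_L (V : lmodType C) (a : Dact V) (c h l : C) : Prop :=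
  [/\ is_Dmodule a, irreducible_Dmod a & exists v, hw_vector a c h l v].

Definition Diso (V W : lmodType C) (a : Dact V) (b : Dact W) : Prop :=
  exists phi : {linear V -> W}, bijective phi /\
  [/\ (forall m v, phi (dop a m v) = dop b m (phi v)),
      (forall k v, phi (hop a k v) = hop b k (phi v)),
      (forall v, phi (cop a v) = cop b (phi v)) &
      (forall v, phi (lop a v) = lop b (phi v))].

(** V (x) A is realised as the space of finitely supported functions
    f : int -> V, f corresponding to sum_j f j (x) v_j.  The predicate [I]
    selects the admissible basis indices (those j with f j = 0 forced
    otherwise). *)
Section FinSupp.
Variables (V : lmodType C) (I : int -> Prop).

Definition fsupp_pred : {pred int -> V} := fun f =>
  `[< exists s : seq int, forall j, j \notin s -> f j = 0 >] &&
  `[< forall j, ~ I j -> f j = 0 >].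

Lemma fsupp_pred_submod : submod_closed fsupp_pred.
Proof.
split.
  apply/andP; split; apply/asboolP; first by exists [::].
  by [].
move=> z u v /andP[/asboolP[s Hs] /asboolP Hu] /andP[/asboolP[t Ht] /asboolP Hv].
apply/andP; split; apply/asboolP.
  exists (s ++ t) => j; rewrite mem_cat negb_or => /andP[js jt].
  by rewrite /GRing.add /GRing.scale /= Hs // Ht // scaler0 addr0.
by move=> j nj; rewrite /GRing.add /GRing.scale /= Hu // Hv // scaler0 addr0.
Qed.

HB.instance Definition _ := GRing.isSubmodClosed.Build C (int -> V) fsupp_pred
  fsupp_pred_submod.

Definition FS := {f : int -> V | fsupp_pred f}.
HB.instance Definition _ := [isSub for (@sval _ fsupp_pred : FS -> _)].
HB.instance Definition _ := [Choice of FS by <:].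
HB.instance Definition _ := [SubChoice_isSubLmodule of FS by <:].

(** lift an operator on raw functions to FS; the raw operators used below
    preserve [fsupp_pred] whenever the operators of V are linear, in which
    case this is just the restriction. *)
Definition fs_lift (F : (int -> V) -> (int -> V)) (f : FS) : FS :=
  insubd (0 : FS) (F (val f)).
End FinSupp.

Definition oddz (n : int) : bool := odd (absz n).

Definition allI : int -> Prop := fun=> True.

(** Basis v_(n/2) of A(al,be,ga) is indexed by n : int.
    d_m v_k = (al + be m - k) v_(m+k); h_r v_k = v_(k+r) for k in Z,
    h_r v_k = ga v_(k+r) for k in 1/2 + Z; c, l act as 0. *)
Definition tensA (V : lmodType C) (a : Dact V) (al be ga : C) : Dact (FS V allI) :=
  DAct
    (fun m => fs_lift (fun f j => dop a m (f j)
        + (al + be * m%:~R - (j - 2 * m)%:~R / 2%:R) *: f (j - 2 * m)))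
    (fun k => fs_lift (fun f j => hop a k (f j)
        + (if oddz (j - (2 * k + 1)) then ga else 1) *: f (j - (2 * k + 1))))
    (fs_lift (fun f j => cop a (f j)))
    (fs_lift (fun f j => lop a (f j))).

(** The index set of A'(al, be): A'(al,be) = A(al,be) unless al is an integer
    and be in {0,-1}; then A'(al,be) is the quotient A(al,0)/C v_al resp. the
    submodule span{v_k : k <> al} of A(al,-1).  In both cases it has basis
    {v_k : k <> al} with d_m v_k = (al + be m - k) v_(m+k) (read as 0 when
    m + k = al). *)
Definition idxA' (al be : C) : int -> Prop :=
  fun j => ~ (al = j%:~R /\ (be = 0 \/ be = -1)).

(** L (x) A'(al, be)^D : H acts as 0 on A'(al,be)^D, c acts as 0. *)
Definition tensA' (V : lmodType C) (a : Dact V) (al be : C) : Dact (FS V (idxA' al be)) :=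
  DAct
    (fun m => fs_lift (fun f j => dop a m (f j)
        + (if `[< idxA' al be j >] then (al + be * m%:~R - (j - m)%:~R) *: f (j - m)
           else 0)))
    (fun k => fs_lift (fun f j => hop a k (f j)))
    (fs_lift (fun f j => cop a (f j)))
    (fs_lift (fun f j => lop a (f j))).

(* Sufficiency: L(c,h,l) is unique up to isomorphism, since the submodule of L (+) L'
   generated by the pair of highest weight vectors is the graph of an isomorphism; and
   shifting the index of the basis v_j of A by the integer (resp. half-integer) al - al1,
   with suitable rescalings, intertwines the two tensor products.
   Necessity: for every vector u of L, d_n u = h_n u = 0 once n is large, so on any fixed
   vector of L (x) A the modes d_n, h_n with n large act through the A factor only.
   Transporting identities satisfied by v (x) v_j (v a highest weight vector) through an
   isomorphism and reading them on a nonzero component of the image gives polynomial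
   identities in the mode numbers, whose coefficients force the parameters to agree; the
   central charges and the weights of the images pin down c, l and h.  The same locality
   separates A from A'^D, on which H acts by zero. *)
From Pilot Require Import Defs.
From HB Require Import structures.
From mathcomp Require Import all_boot all_order all_algebra.
From mathcomp Require Import boolp classical_sets functions.
From mathcomp Require Import complex.
From mathcomp Require Import Rstruct.
From mathcomp Require Import zify ring.

Set Implicit Arguments.
Unset Strict Implicit.
Unset Printing Implicit Defensive.

Import Order.TTheory GRing.Theory Num.Theory.
Local Open Scope ring_scope.

Definition linear_of (U W : lmodType C) (g : U -> W) (gL : linear g) : {linear U -> W} :=
  HB.pack g (GRing.isLinear.Build C U W *:%R g gL).

Section LinearMaps.
Variables (U W : lmodType C) (T : U -> W) (TL : linear T).

Lemma lin0 : T 0 = 0. Proof. exact: linear0 (linear_of TL). Qed.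
Lemma linD x y : T (x + y) = T x + T y. Proof. exact (linearD (linear_of TL) x y). Qed.
Lemma linZ k x : T (k *: x) = k *: T x. Proof. exact (linearZZ (linear_of TL) k x). Qed.
Lemma linB x y : T (x - y) = T x - T y. Proof. exact (linearB (linear_of TL) x y). Qed.
Lemma lin_sum I (s : seq I) (F : I -> U) : T (\sum_(i <- s) F i) = \sum_(i <- s) T (F i).
Proof. exact: (linear_sum (linear_of TL)). Qed.

End LinearMaps.

Lemma scaler_cancel (W : lmodType C) (u : W) (x y : C) : u != 0 -> x *: u = y *: u -> x = y.
Proof.
by move=> u0 /eqP; rewrite -subr_eq0 -scalerBl scaler_eq0 (negbTE u0) orbF subr_eq0 => /eqP.
Qed.

Lemma poly2_eventually0 (r0 r1 r2 : C) (N : int) :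
  (forall x : int, N <= x -> r0 + r1 * x%:~R + r2 * x%:~R ^+ 2 = 0) ->
  [/\ r0 = 0, r1 = 0 & r2 = 0].
Proof.
move=> H.
have e0 := H N (lexx _); have e1 := H (N + 1) ltac:(lia); have e2 := H (N + 2) ltac:(lia).
rewrite !intrD in e1 e2; set X := N%:~R in e0 e1 e2.
pose p x := r0 + r1 * x + r2 * x ^+ 2.
have r20 : r2 = 0.
  have : 2%:R * r2 = p (X + 2%:~R) - 2%:R * p (X + 1%:~R) + p X by rewrite /p; ring.
  rewrite /p e0 e1 e2 mulr0 !subr0 addr0 => /eqP.
  by rewrite mulf_eq0 pnatr_eq0 => /eqP.
have r10 : r1 = 0.
  have : r1 = p (X + 1%:~R) - p X - r2 * (2%:R * X + 1) by rewrite /p; ring.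
  by rewrite /p e0 e1 r20 mul0r !subr0.
by split=> //; rewrite -e0 r10 r20; ring.
Qed.

Lemma poly1_eventually0 (r0 r1 : C) (N : int) :
  (forall x : int, N <= x -> r0 + r1 * x%:~R = 0) -> r0 = 0 /\ r1 = 0.
Proof.
move=> H; have [|-> -> _ //] := @poly2_eventually0 r0 r1 0 N.
by move=> x Nx; rewrite mul0r addr0 H.
Qed.

Lemma commE (V : lmodType C) (x y : V -> V) v : x (y v) = y (x v) + comm x y v.
Proof. by rewrite /comm addrC subrK. Qed.

Section DmoduleRelations.
Variables (W : lmodType C) (b : Dact W) (Hb : is_Dmodule b).

Lemma dop_linear m : linear (dop b m). Proof. by case: Hb. Qed.
Lemma hop_linear k : linear (hop b k). Proof. by case: Hb. Qed.
Lemma cop_linear : linear (cop b). Proof. by case: Hb. Qed.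
Lemma lop_linear : linear (lop b). Proof. by case: Hb. Qed.

Lemma dop_dop m n v : dop b m (dop b n v) = dop b n (dop b m v) +
  ((m - n)%:~R *: dop b (m + n) v
   + (if m + n == 0 then ((m ^+ 3 - m)%:~R / 12%:R) *: cop b v else 0)).
Proof. by case: Hb => _ _ _ _ [DD _ _ _ _]; rewrite commE DD. Qed.

Lemma dop_hop m k v : dop b m (hop b k v) = hop b k (dop b m v) - Defs.half k *: hop b (m + k) v.
Proof. by case: Hb => _ _ _ _ [_ DH _ _ _]; rewrite commE DH scaleNr. Qed.

Lemma hop_dop k m v : hop b k (dop b m v) = dop b m (hop b k v) + Defs.half k *: hop b (m + k) v.
Proof. by rewrite dop_hop subrK. Qed.

Lemma hop_hop k j v : hop b k (hop b j v) = hop b j (hop b k v) +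
  (if k + j + 1 == 0 then Defs.half k *: lop b v else 0).
Proof. by case: Hb => _ _ _ _ [_ _ HH _ _]; rewrite commE HH. Qed.

Lemma cop_dop m v : cop b (dop b m v) = dop b m (cop b v).
Proof. by case: Hb => _ _ _ _ [_ _ _ [CD _] _]; rewrite commE CD addr0. Qed.

Lemma cop_hop k v : cop b (hop b k v) = hop b k (cop b v).
Proof. by case: Hb => _ _ _ _ [_ _ _ [_ CH] _]; rewrite commE CH addr0. Qed.

Lemma lop_dop m v : lop b (dop b m v) = dop b m (lop b v).
Proof. by case: Hb => _ _ _ _ [_ _ _ _ [LD _ _]]; rewrite commE LD addr0. Qed.

Lemma lop_hop k v : lop b (hop b k v) = hop b k (lop b v).
Proof. by case: Hb => _ _ _ _ [_ _ _ _ [_ LH _]]; rewrite commE LH addr0. Qed.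

Lemma dop0_dop m y mu : m != 0 -> dop b 0 y = mu *: y ->
  dop b 0 (dop b m y) = (mu - m%:~R) *: dop b m y.
Proof.
move=> m0 Hy; rewrite dop_dop Hy (linZ (dop_linear m)) !add0r (negbTE m0) addr0.
by rewrite mulrNz scaleNr scalerBl.
Qed.

Lemma dop0_hop k y mu : dop b 0 y = mu *: y ->
  dop b 0 (hop b k y) = (mu - Defs.half k) *: hop b k y.
Proof. by move=> Hy; rewrite dop_hop Hy (linZ (hop_linear k)) add0r scalerBl. Qed.

Lemma eigen_sum_eq0 (s : seq (C * W)) u mu : dop b 0 u = mu *: u ->
  (forall p, p \in s -> dop b 0 p.2 = p.1 *: p.2 /\ p.1 != mu) ->
  u = \sum_(p <- s) p.2 -> u = 0.
Proof.
move: {2}(size s) (erefl (size s)) => n.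
elim: n s u => [|n IH] [|p s] u sn Hu Hs E //=; try by rewrite E big_nil.
case: sn => sn.
have [Hp1 Hp2] := Hs p (mem_head _ _).
have Hs' q : q \in s -> dop b 0 q.2 = q.1 *: q.2 /\ q.1 != mu.
  by move=> qs; apply: Hs; rewrite inE qs orbT.
rewrite big_cons in E.
(* Applying [d_0 - p.1] removes the summand [p.2] and rescales the others. *)
have E' : (mu - p.1) *: u = \sum_(q <- s) (q.1 - p.1) *: q.2.
  rewrite scalerBl -Hu E (linD (dop_linear 0)) Hp1 (lin_sum (dop_linear 0)) scalerDr.
  rewrite (eq_big_seq (fun q => q.1 *: q.2)); last by move=> q /Hs' [].
  rewrite opprD addrACA subrr add0r scaler_sumr -sumrB.
  by apply: eq_bigr => q _; rewrite scalerBl.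
have : (mu - p.1) *: u = 0.
  apply: (IH [seq (q.1, (q.1 - p.1) *: q.2) | q <- s]); rewrite ?size_map //.
  - by rewrite (linZ (dop_linear 0)) Hu !scalerA mulrC.
  - move=> q /mapP[q' /Hs' [q1 q2] ->] /=; split=> //.
    by rewrite (linZ (dop_linear 0)) q1 !scalerA mulrC.
  - by rewrite E' big_map.
by move/eqP; rewrite scaler_eq0 subr_eq0 eq_sym (negbTE Hp2) => /eqP.
Qed.

End DmoduleRelations.

Section HighestWeightSpan.
Variables (W : lmodType C) (b : Dact W) (Hb : is_Dmodule b).
Variables (c h l : C) (w : W) (Hw : hw_vector b c h l w).

Inductive hw_span : W -> Prop :=
 | hw_span_vec : hw_span w
 | hw_span0 : hw_span 0
 | hw_spanD u1 u2 : hw_span u1 -> hw_span u2 -> hw_span (u1 + u2)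
 | hw_spanZ z u : hw_span u -> hw_span (z *: u)
 | hw_span_dop m u : m < 0 -> hw_span u -> hw_span (dop b m u)
 | hw_span_hop k u : k < 0 -> hw_span u -> hw_span (hop b k u).

Let dL := dop_linear Hb.
Let hL := hop_linear Hb.

Lemma hw_span_cop u : hw_span u -> cop b u = c *: u.
Proof.
case: Hw => _ _ Hc _ _.
elim=> [|||z u' _ IH|m u' _ _ IH|k u' _ _ IH].
- exact: Hc.
- by rewrite (lin0 (cop_linear Hb)) scaler0.
- by move=> u1 u2 _ IH1 _ IH2; rewrite (linD (cop_linear Hb)) IH1 IH2 scalerDr.
- by rewrite (linZ (cop_linear Hb)) IH !scalerA mulrC.
- by rewrite (cop_dop Hb) IH (linZ (dL m)).
- by rewrite (cop_hop Hb) IH (linZ (hL k)).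
Qed.

Lemma hw_span_lop u : hw_span u -> lop b u = l *: u.
Proof.
case: Hw => _ _ _ Hl _.
elim=> [|||z u' _ IH|m u' _ _ IH|k u' _ _ IH].
- exact: Hl.
- by rewrite (lin0 (lop_linear Hb)) scaler0.
- by move=> u1 u2 _ IH1 _ IH2; rewrite (linD (lop_linear Hb)) IH1 IH2 scalerDr.
- by rewrite (linZ (lop_linear Hb)) IH !scalerA mulrC.
- by rewrite (lop_dop Hb) IH (linZ (dL m)).
- by rewrite (lop_hop Hb) IH (linZ (hL k)).
Qed.

Lemma hw_span_dop0 u : hw_span u -> hw_span (dop b 0 u).
Proof.
case: Hw => _ Hd0 _ _ _.
elim=> [|||z u' _ IH|m u' m0 Su IH|k u' k0 Su IH].
- by rewrite Hd0; apply/hw_spanZ/hw_span_vec.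
- by rewrite (lin0 (dL 0)); apply: hw_span0.
- by move=> u1 u2 _ IH1 _ IH2; rewrite (linD (dL 0)); apply: hw_spanD.
- by rewrite (linZ (dL 0)); apply: hw_spanZ.
- rewrite (dop_dop Hb) !add0r (negbTE (ltr0_neq0 m0)) addr0.
  by apply: hw_spanD; [apply: hw_span_dop|apply/hw_spanZ/hw_span_dop].
- rewrite (dop_hop Hb) add0r -scaleNr.
  by apply: hw_spanD; [apply: hw_span_hop|apply/hw_spanZ/hw_span_hop].
Qed.

Lemma hw_span_raise u : hw_span u ->
  (forall n, 0 < n -> hw_span (dop b n u)) /\ (forall k, 0 <= k -> hw_span (hop b k u)).
Proof.
case: Hw => _ _ _ _ [Hdp Hhp].
elim=> [|||z u' _ [IH1 IH2]|m u' m0 Su [IH1 IH2]|k u' k0 Su [IH1 IH2]].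
- by split=> n n0; [rewrite Hdp|rewrite Hhp] => //; apply: hw_span0.
- by split=> n _; [rewrite (lin0 (dL n))|rewrite (lin0 (hL n))]; apply: hw_span0.
- move=> u1 u2 _ [A1 A2] _ [B1 B2].
  by split=> n n0; [rewrite (linD (dL n))|rewrite (linD (hL n))]; apply: hw_spanD;
    [apply: A1|apply: B1|apply: A2|apply: B2].
- by split=> n n0; [rewrite (linZ (dL n))|rewrite (linZ (hL n))]; apply: hw_spanZ;
    [apply: IH1|apply: IH2].
- have any_dop p : hw_span (dop b p u').
    by case: (ltgtP p 0) => [p0|p0|->]; [exact: hw_span_dop|exact: IH1|exact: hw_span_dop0].
  have any_hop p : hw_span (hop b p u').
    by case: (ltP p 0) => [p0|p0]; [exact: hw_span_hop|exact: IH2].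
  split=> n n0.
  + rewrite (dop_dop Hb); apply: hw_spanD; first exact/hw_span_dop/IH1.
    apply: hw_spanD; first exact: hw_spanZ.
    by case: ifP => _; [rewrite (hw_span_cop Su); apply/hw_spanZ/hw_spanZ|apply: hw_span0].
  + by rewrite (hop_dop Hb); apply: hw_spanD; [exact/hw_span_dop/IH2|exact/hw_spanZ].
- have any_hop p : hw_span (hop b p u').
    by case: (ltP p 0) => [p0|p0]; [exact: hw_span_hop|exact: IH2].
  split=> n n0.
  + rewrite (dop_hop Hb) -scaleNr.
    by apply: hw_spanD; [exact/hw_span_hop/IH1|exact/hw_spanZ].
  + rewrite (hop_hop Hb); apply: hw_spanD; first exact/hw_span_hop/IH2.
    by case: ifP => _; [rewrite (hw_span_lop Su); apply/hw_spanZ/hw_spanZ|apply: hw_span0].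
Qed.

Lemma hw_span_submodule : is_Dsubmodule b hw_span.
Proof.
have any_dop m u : hw_span u -> hw_span (dop b m u).
  move=> Su; case: (ltgtP m 0) => [m0|m0|->].
  - exact: hw_span_dop.
  - exact: (hw_span_raise Su).1.
  - exact: hw_span_dop0.
have any_hop k u : hw_span u -> hw_span (hop b k u).
  by move=> Su; case: (ltP k 0) => [k0|k0]; [exact: hw_span_hop|exact: (hw_span_raise Su).2].
split=> //; [exact: hw_span0|exact: hw_spanD|exact: hw_spanZ|split=> // u Su].
- by rewrite (hw_span_cop Su); apply: hw_spanZ.
- by rewrite (hw_span_lop Su); apply: hw_spanZ.
Qed.

Definition hw_decomp (u : W) := exists (lam : C) (s : seq (nat * W)),
  u = lam *: w + \sum_(p <- s) p.2 /\
  forall p, p \in s -> (0 < p.1)%N /\ dop b 0 p.2 = (h + p.1%:R / 2%:R) *: p.2.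

Lemma hw_decompD u1 u2 : hw_decomp u1 -> hw_decomp u2 -> hw_decomp (u1 + u2).
Proof.
move=> [l1 [s1 [E1 H1]]] [l2 [s2 [E2 H2]]].
exists (l1 + l2), (s1 ++ s2); split; last by move=> p; rewrite mem_cat => /orP[/H1|/H2].
by rewrite E1 E2 big_cat /= scalerDl addrACA.
Qed.

Lemma hw_decompZ z u : hw_decomp u -> hw_decomp (z *: u).
Proof.
move=> [lam [s [E Hs]]]; exists (z * lam), [seq (p.1, z *: p.2) | p <- s]; split.
  by rewrite E scalerDr big_map scaler_sumr scalerA.
move=> p /mapP[q /Hs [q0 Hq] ->] /=; split=> //.
by rewrite (linZ (dL 0)) Hq !scalerA mulrC.
Qed.

Lemma hw_decomp_dop m u : m < 0 -> hw_decomp u -> hw_decomp (dop b m u).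
Proof.
case: Hw => _ Hd0 _ _ _; case: m => [//|M] _ [lam [s [E Hs]]].
exists 0, (((2 * M.+1)%N, lam *: dop b (Negz M) w) ::
   [seq ((p.1 + 2 * M.+1)%N, dop b (Negz M) p.2) | p <- s]); split.
  rewrite scale0r add0r big_cons big_map E (linD (dL _)) (linZ (dL _)).
  by rewrite (lin_sum (dL _)).
move=> p; rewrite inE => /orP[/eqP -> /=|/mapP[q /Hs [q0 Hq] ->] /=].
  split; first by rewrite muln_gt0.
  rewrite (linZ (dL 0)) (dop0_dop Hb _ Hd0) // !scalerA NegzE.
  by congr (_ *: _); rewrite mulrNz natrM; field.
split; first by rewrite addn_gt0 q0.
rewrite (dop0_dop Hb _ Hq) // NegzE.
by congr (_ *: _); rewrite mulrNz natrD natrM; field.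
Qed.

Lemma hw_decomp_hop k u : k < 0 -> hw_decomp u -> hw_decomp (hop b k u).
Proof.
case: Hw => _ Hd0 _ _ _; case: k => [//|K] _ [lam [s [E Hs]]].
exists 0, (((2 * K + 1)%N, lam *: hop b (Negz K) w) ::
   [seq ((p.1 + 2 * K + 1)%N, hop b (Negz K) p.2) | p <- s]); split.
  rewrite scale0r add0r big_cons big_map E (linD (hL _)) (linZ (hL _)).
  by rewrite (lin_sum (hL _)).
move=> p; rewrite inE => /orP[/eqP -> /=|/mapP[q /Hs [q0 Hq] ->] /=].
  split; first by rewrite addn1.
  rewrite (linZ (dL 0)) (dop0_hop Hb _ Hd0) !scalerA /Defs.half NegzE.
  by congr (_ *: _); rewrite mulrNz natrD natrM; field.
split; first by rewrite addn1.
rewrite (dop0_hop Hb _ Hq) /Defs.half NegzE.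
by congr (_ *: _); rewrite mulrNz natrD; field.
Qed.

Lemma hw_span_decomp u : hw_span u -> hw_decomp u.
Proof.
elim=> [||u1 u2 _ ? _ ?|z u' _ ?|m u' m0 _ ?|k u' k0 _ ?].
- by exists 1, [::]; rewrite big_nil scale1r addr0.
- by exists 0, [::]; rewrite big_nil scale0r addr0.
- exact: hw_decompD.
- exact: hw_decompZ.
- exact: hw_decomp_dop.
- exact: hw_decomp_hop.
Qed.

Lemma hw_span_weight u mu : hw_span u -> u != 0 -> dop b 0 u = mu *: u ->
  exists j : nat, mu = h + j%:R / 2%:R.
Proof.
move=> Su u0 Hu; have [//|Hn] := pselect (exists j : nat, mu = h + j%:R / 2%:R).
case/eqP: u0.
have [lam [s [E Hs]]] := hw_span_decomp Su.
apply: (eigen_sum_eq0 Hb (s := (h, lam *: w) :: [seq (h + p.1%:R / 2%:R, p.2) | p <- s]) Hu).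
- move=> p; rewrite inE => /orP[/eqP -> /=|/mapP[q /Hs [q0 Hq] ->] /=].
    split; first by case: Hw => _ Hd0 _ _ _; rewrite (linZ (dL 0)) Hd0 !scalerA mulrC.
    by apply/eqP => hmu; apply: Hn; exists 0%N; rewrite -hmu mul0r addr0.
  by split=> //; apply/eqP => hmu; apply: Hn; exists q.1.
- by rewrite big_cons big_map.
Qed.

Lemma hw_span_top_weight u : hw_span u -> dop b 0 u = h *: u -> exists lam, u = lam *: w.
Proof.
move=> Su Hu; have [lam [s [E Hs]]] := hw_span_decomp Su.
exists lam; apply/eqP; rewrite -subr_eq0; apply/eqP.
apply: (eigen_sum_eq0 Hb (s := [seq (h + p.1%:R / 2%:R, p.2) | p <- s]) (mu := h)).
- rewrite (linB (dL 0)) (linZ (dL 0)) Hu.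
  by case: Hw => _ -> _ _ _; rewrite scalerBr !scalerA mulrC.
- move=> p /mapP[q /Hs [q0 Hq] ->] /=; split=> //.
  rewrite -subr_eq0 addrAC subrr add0r mulf_eq0 invr_eq0 !pnatr_eq0.
  by rewrite negb_or -lt0n q0.
- by rewrite E big_map addrAC subrr add0r.
Qed.

Lemma hw_span_restricted u : hw_span u ->
  exists2 N : int, 0 <= N & forall n, N <= n -> dop b n u = 0 /\ hop b n u = 0.
Proof.
elim=> [|||z u' _ [N N0 HN]|m u' m0 _ [N N0 HN]|k u' k0 _ [N N0 HN]].
- case: Hw => _ _ _ _ [Hdp Hhp].
  by exists 1 => // n n1; split; [apply: Hdp|apply: Hhp]; lia.
- by exists 0 => // n _; rewrite (lin0 (dL n)) (lin0 (hL n)).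
- move=> u1 u2 _ [N1 N10 H1] _ [N2 N20 H2].
  exists (N1 + N2) => [|n Hn]; first lia.
  have [A1 A2] := H1 n ltac:(lia); have [B1 B2] := H2 n ltac:(lia).
  by rewrite (linD (dL n)) (linD (hL n)) A1 A2 B1 B2 addr0.
- exists N => // n Hn; have [A1 A2] := HN n Hn.
  by rewrite (linZ (dL n)) (linZ (hL n)) A1 A2 !scaler0.
- exists (N - m + 1) => [|n Hn]; first lia.
  have [A1 A2] := HN n ltac:(lia); have [B1 _] := HN (n + m) ltac:(lia).
  have [_ C2] := HN (m + n) ltac:(lia).
  rewrite (dop_dop Hb) (hop_dop Hb) A1 A2 B1 C2 (lin0 (dL m)) !scaler0 !add0r.
  by rewrite ifF //; lia.
- exists (N - k + 1) => [|n Hn]; first lia.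
  have [A1 A2] := HN n ltac:(lia); have [_ B2] := HN (n + k) ltac:(lia).
  rewrite (dop_hop Hb) (hop_hop Hb) A1 A2 B2 (lin0 (hL k)) scaler0 subr0 add0r.
  by rewrite ifF //; lia.
Qed.

End HighestWeightSpan.

Section IrreducibleHighestWeight.
Variables (W : lmodType C) (b : Dact W) (Hb : is_Dmodule b) (Ib : irreducible_Dmod b).

Lemma irr_submodule_full S x : is_Dsubmodule b S -> S x -> x != 0 -> forall y, S y.
Proof. by move=> Ssub Sx x0; case: Ib => _ /(_ _ Ssub) [/(_ _ Sx)/eqP|]; rewrite ?(negbTE x0). Qed.

Variables (c h l : C) (w : W) (Hw : hw_vector b c h l w).

Lemma irr_hw_span u : hw_span b w u.
Proof.
apply: (irr_submodule_full (hw_span_submodule Hb Hw) (hw_span_vec _ _)).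
by case: Hw.
Qed.

Lemma irr_cop u : cop b u = c *: u.
Proof. exact: (hw_span_cop Hb Hw (irr_hw_span u)). Qed.

Lemma irr_lop u : lop b u = l *: u.
Proof. exact: (hw_span_lop Hb Hw (irr_hw_span u)). Qed.

Lemma irr_weight u mu : u != 0 -> dop b 0 u = mu *: u -> exists j : nat, mu = h + j%:R / 2%:R.
Proof. exact: (hw_span_weight Hb Hw (irr_hw_span u)). Qed.

Lemma irr_restricted u :
  exists2 N : int, 0 <= N & forall n, N <= n -> dop b n u = 0 /\ hop b n u = 0.
Proof. exact: (hw_span_restricted Hb Hw (irr_hw_span u)). Qed.

End IrreducibleHighestWeight.

Definition is_Dhom (V W : lmodType C) (a : Dact V) (b : Dact W) (f : V -> W) : Prop :=
  [/\ linear f, (forall m v, f (dop a m v) = dop b m (f v)),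
      (forall k v, f (hop a k v) = hop b k (f v)),
      (forall v, f (cop a v) = cop b (f v)) & (forall v, f (lop a v) = lop b (f v))].

Section DmoduleMaps.
Variables (V W : lmodType C) (a : Dact V) (b : Dact W).

Lemma DisoP : Diso a b <-> exists2 f, is_Dhom a b f & bijective f.
Proof.
split=> [[phi [phi_bij [D H Cc Ll]]]|[f [fL D H Cc Ll] f_bij]].
  by exists phi => //; split=> // k x y; rewrite linearD linearZ.
by exists (linear_of fL).
Qed.

Lemma is_Dhom_inv f g : is_Dhom a b f -> cancel f g -> cancel g f -> is_Dhom b a g.
Proof.
case=> fL D H Cc Ll fK gK; have fI := can_inj fK.
split=> [k x y|m x|k x|x|x]; apply: fI; by rewrite ?(linD fL) ?(linZ fL) ?D ?H ?Cc ?Ll !gK.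
Qed.

Lemma Dsubmodule_preim f S : is_Dhom a b f -> is_Dsubmodule b S ->
  is_Dsubmodule a (fun x => S (f x)).
Proof.
case=> fL D H Cc Ll [S0 SD SZ Sd [Sh Sc Sl]].
split; rewrite ?(lin0 fL) //; first by move=> x y Sx Sy; rewrite (linD fL); apply: SD.
- by move=> z x Sx; rewrite (linZ fL); apply: SZ.
- by move=> m x Sx; rewrite D; apply: Sd.
by split=> [k||] x Sx; rewrite ?H ?Cc ?Ll; [apply: Sh|apply: Sc|apply: Sl].
Qed.

Lemma Dsubmodule_image f S : is_Dhom a b f -> is_Dsubmodule a S ->
  is_Dsubmodule b (fun y => exists2 x, S x & f x = y).
Proof.
case=> fL D H Cc Ll [S0 SD SZ Sd [Sh Sc Sl]].
split; first by exists 0; rewrite ?(lin0 fL).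
- by move=> _ _ [x Sx <-] [y Sy <-]; exists (x + y); rewrite ?(linD fL) //; apply: SD.
- by move=> z _ [x Sx <-]; exists (z *: x); rewrite ?(linZ fL) //; apply: SZ.
- by move=> m _ [x Sx <-]; exists (dop a m x); rewrite ?D //; apply: Sd.
split=> [k||] _ [x Sx <-].
- by exists (hop a k x); rewrite ?H //; apply: Sh.
- by exists (cop a x); rewrite ?Cc //; apply: Sc.
- by exists (lop a x); rewrite ?Ll //; apply: Sl.
Qed.

End DmoduleMaps.

Lemma Diso_sym (V W : lmodType C) (a : Dact V) (b : Dact W) : Diso a b -> Diso b a.
Proof.
case/DisoP=> f fhom [g fK gK]; apply/DisoP.
by exists g; [exact: is_Dhom_inv fhom fK gK|exists f].
Qed.

Lemma Dhom_neq0 (V W : lmodType C) (a : Dact V) (b : Dact W) f x :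
  is_Dhom a b f -> injective f -> x != 0 -> f x != 0.
Proof. by case=> fL _ _ _ _ fI; apply: contra_neq => fx0; apply: fI; rewrite fx0 (lin0 fL). Qed.

Lemma Dhom_central_eq (V W : lmodType C) (a : Dact V) (b : Dact W) f x (c c1 l l1 : C) :
  is_Dhom a b f -> f x != 0 ->
  (forall u, cop a u = c *: u) -> (forall u, cop b u = c1 *: u) ->
  (forall u, lop a u = l *: u) -> (forall u, lop b u = l1 *: u) -> c = c1 /\ l = l1.
Proof.
case=> fL _ _ Cc Ll fx0 ca cb la lb.
split; apply: (scaler_cancel fx0).
- by rewrite -cb -Cc ca (linZ fL).
- by rewrite -lb -Ll la (linZ fL).
Qed.

Section ProductModule.
Variables (V V1 : lmodType C) (a : Dact V) (a1 : Dact V1).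

Definition Dprod : Dact (V * V1)%type :=
  DAct (fun m x => (dop a m x.1, dop a1 m x.2)) (fun k x => (hop a k x.1, hop a1 k x.2))
       (fun x => (cop a x.1, cop a1 x.2)) (fun x => (lop a x.1, lop a1 x.2)).

Lemma pair_ext (x y : (V * V1)%type) : x.1 = y.1 -> x.2 = y.2 -> x = y.
Proof. by case: x y => ? ? [? ?] /= -> ->. Qed.

Hypotheses (Ha : is_Dmodule a) (Ha1 : is_Dmodule a1).

Lemma Dprod_module : is_Dmodule Dprod.
Proof.
have [L1 L2 L3 L4 [DD DH HH [CD CH] [LD LH CL]]] := Ha.
have [M1 M2 M3 M4 [EE EH GG [ED EC] [FD FH FL]]] := Ha1.
split.
- by move=> m k x y; apply: pair_ext; [exact: L1|exact: M1].
- by move=> m k x y; apply: pair_ext; [exact: L2|exact: M2].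
- by move=> k x y; apply: pair_ext; [exact: L3|exact: M3].
- by move=> k x y; apply: pair_ext; [exact: L4|exact: M4].
split.
- move=> m n x; have E1 := DD m n x.1; have E2 := EE m n x.2.
  by apply: pair_ext; [move: E1|move: E2]; case: (m + n == 0).
- by move=> m k x; apply: pair_ext; [exact: DH|exact: EH].
- move=> k j x; have E1 := HH k j x.1; have E2 := GG k j x.2.
  by apply: pair_ext; [move: E1|move: E2]; case: (k + j + 1 == 0).
- by split=> [m|k] x; apply: pair_ext; [exact: CD|exact: ED|exact: CH|exact: EC].
split=> [m|k|] x; apply: pair_ext; [exact: LD|exact: FD|exact: LH|exact: FH|exact: CL|exact: FL].
Qed.

Lemma Dhom_fst : is_Dhom Dprod a fst. Proof. by []. Qed.
Lemma Dhom_snd : is_Dhom Dprod a1 snd. Proof. by []. Qed.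

Lemma Dhom_inl : is_Dhom a Dprod (fun x => (x, 0)).
Proof.
split=> [k x y|m x|k x|x|x]; apply: pair_ext => //=;
  by rewrite ?scaler0 ?addr0 ?(lin0 (dop_linear Ha1 _)) ?(lin0 (hop_linear Ha1 _))
             ?(lin0 (cop_linear Ha1)) ?(lin0 (lop_linear Ha1)).
Qed.

Lemma Dhom_inr : is_Dhom a1 Dprod (fun y => (0, y)).
Proof.
split=> [k x y|m x|k x|x|x]; apply: pair_ext => //=;
  by rewrite ?scaler0 ?addr0 ?(lin0 (dop_linear Ha _)) ?(lin0 (hop_linear Ha _))
             ?(lin0 (cop_linear Ha)) ?(lin0 (lop_linear Ha)).
Qed.

End ProductModule.

Section UniquenessL.
Variables (V V1 : lmodType C) (a : Dact V) (a1 : Dact V1).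
Hypotheses (Ha : is_Dmodule a) (Ha1 : is_Dmodule a1).
Hypotheses (Ia : irreducible_Dmod a) (Ia1 : irreducible_Dmod a1).
Variables (c h l : C) (v : V) (v1 : V1).
Hypotheses (Hv : hw_vector a c h l v) (Hv1 : hw_vector a1 c h l v1).

Let P := Dprod a a1.
Let HP : is_Dmodule P := Dprod_module Ha Ha1.

Lemma Dprod_hw : hw_vector P c h l (v, v1).
Proof.
case: Hv => v0 A1 A2 A3 [A4 A5]; case: Hv1 => _ B1 B2 B3 [B4 B5].
split; try by apply: pair_ext.
- by apply: contra_neq v0; move/(congr1 fst).
- by split=> n n0; apply: pair_ext; [exact: A4|exact: B4|exact: A5|exact: B5].
Qed.

Let S := hw_span P (v, v1).
Let Ssub : is_Dsubmodule P S := hw_span_submodule HP Dprod_hw.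

Let SB x y : S x -> S y -> S (x - y).
Proof. by have [_ SD SZ _ _] := Ssub => Sx Sy; rewrite -scaleN1r; apply/SD/SZ. Qed.

Lemma graph_fst_total x : exists y, S (x, y).
Proof.
have Sv : exists2 p, S p & p.1 = v by exists (v, v1) => //; apply: hw_span_vec.
have [|p Sp <-] := irr_submodule_full Ia (Dsubmodule_image (Dhom_fst a a1) Ssub) Sv _ x.
  by case: Hv.
by exists p.2; case: p Sp.
Qed.

Lemma graph_snd_total y : exists x, S (x, y).
Proof.
have Sv : exists2 p, S p & p.2 = v1 by exists (v, v1) => //; apply: hw_span_vec.
have [|p Sp <-] := irr_submodule_full Ia1 (Dsubmodule_image (Dhom_snd a a1) Ssub) Sv _ y.
  by case: Hv1.
by exists p.1; case: p Sp.
Qed.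

(* Otherwise the fiber is all of L', so the span contains [(0, v1)], a vector of weight [h] that
   is not proportional to [(v, v1)]. *)
Lemma graph_fst_fiber0 y : S (0, y) -> y = 0.
Proof.
move=> S0y; apply: contraTeq isT => y0.
have := irr_submodule_full Ia1 (Dsubmodule_preim (Dhom_inr a1 Ha) Ssub) S0y y0 v1.
move=> /(hw_span_top_weight HP Dprod_hw) [|lam [E1 E2]].
  by apply: pair_ext; rewrite /= ?(lin0 (dop_linear Ha 0)) ?scaler0 //; case: Hv1.
case: Hv Hv1 => v0 _ _ _ _ [v10 _ _ _ _].
move/esym/eqP: E1; rewrite scaler_eq0 (negbTE v0) orbF => /eqP lam0.
by move: v10; rewrite E2 lam0 scale0r eqxx.
Qed.

Lemma graph_snd_fiber0 x : S (x, 0) -> x = 0.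
Proof.
move=> Sx0; apply: contraTeq isT => x0.
have := irr_submodule_full Ia (Dsubmodule_preim (Dhom_inl a Ha1) Ssub) Sx0 x0 v.
move=> /(hw_span_top_weight HP Dprod_hw) [|lam [E1 E2]].
  by apply: pair_ext; rewrite /= ?(lin0 (dop_linear Ha1 0)) ?scaler0 //; case: Hv.
case: Hv Hv1 => v0 _ _ _ _ [v10 _ _ _ _].
move/esym/eqP: E2; rewrite scaler_eq0 (negbTE v10) orbF => /eqP lam0.
by move: v0; rewrite E1 lam0 scale0r eqxx.
Qed.

Lemma graph_functional x y y' : S (x, y) -> S (x, y') -> y = y'.
Proof.
move=> Sy Sy'; apply/eqP; rewrite -subr_eq0; apply/eqP/graph_fst_fiber0.
by have := SB Sy Sy'; congr S; apply: pair_ext; rewrite /= ?subrr.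
Qed.

Lemma graph_injective x x' y : S (x, y) -> S (x', y) -> x = x'.
Proof.
move=> Sx Sx'; apply/eqP; rewrite -subr_eq0; apply/eqP/graph_snd_fiber0.
by have := SB Sx Sx'; congr S; apply: pair_ext; rewrite /= ?subrr.
Qed.

Lemma hw_graph_iso : exists2 psi, is_Dhom a a1 psi & bijective psi.
Proof.
pose psi x := projT1 (cid (graph_fst_total x)).
pose psi' y := projT1 (cid (graph_snd_total y)).
have Spsi x : S (x, psi x) by rewrite /psi; case: cid.
have Spsi' y : S (psi' y, y) by rewrite /psi'; case: cid.
have [_ SD SZ Sd [Sh Sc Sl]] := Ssub.
exists psi.
  split=> [k x y|m x|k x|x|x]; apply: (graph_functional (Spsi _)).
  - exact: (SD _ _ (SZ k _ (Spsi x)) (Spsi y)).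
  - exact: (Sd m _ (Spsi x)).
  - exact: (Sh k _ (Spsi x)).
  - exact: (Sc _ (Spsi x)).
  - exact: (Sl _ (Spsi x)).
exists psi' => [x|y].
- exact: graph_injective (Spsi' (psi x)) (Spsi x).
- exact: graph_functional (Spsi (psi' y)) (Spsi' y).
Qed.

End UniquenessL.

Lemma is_L_iso (V V1 : lmodType C) (a : Dact V) (a1 : Dact V1) c h l :
  is_L a c h l -> is_L a1 c h l -> exists2 psi, is_Dhom a a1 psi & bijective psi.
Proof. by case=> Ha Ia [v Hv] [Ha1 Ia1 [v1 Hv1]]; apply: (hw_graph_iso Ha Ha1 Ia Ia1 Hv Hv1). Qed.

Section FinSuppTheory.
Variables (V : lmodType C) (I : int -> Prop).

Lemma fsuppP (f : int -> V) : fsupp_pred I f <->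
  (exists s : seq int, forall j, j \notin s -> f j = 0) /\ (forall j, ~ I j -> f j = 0).
Proof. by split=> [/andP[/asboolP ? /asboolP ?] //|[? ?]]; apply/andP; split; apply/asboolP. Qed.

Lemma fs_support (f : FS V I) :
  (exists s : seq int, forall j, j \notin s -> val f j = 0) /\ (forall j, ~ I j -> val f j = 0).
Proof. exact/fsuppP/valP. Qed.

Lemma fs_valZ k (f : FS V I) j : val (k *: f) j = k *: val f j.
Proof. by []. Qed.

Lemma fs_ext (f g : FS V I) : (forall j, val f j = val g j) -> f = g.
Proof. by move=> fg; apply/val_inj/funext. Qed.

Lemma fs_neq0 (f : FS V I) : f != 0 -> exists j, val f j != 0.
Proof.
move=> f0; have [//|Hn] := pselect (exists j, val f j != 0).
by case/eqP: f0; apply: fs_ext => j; apply/eqP; apply: contra_notT Hn => fj; exists j.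
Qed.

Lemma fsupp_shift (f g : int -> V) sh : fsupp_pred I f ->
  (forall j, f j = 0 -> f (j - sh) = 0 -> g j = 0) -> (forall j, ~ I j -> g j = 0) ->
  fsupp_pred I g.
Proof.
move=> /fsuppP [[s Hs] _] Hg HI; apply/fsuppP; split=> //.
exists (s ++ [seq x + sh | x <- s]) => j; rewrite mem_cat negb_or => /andP[js jm].
apply: Hg; first exact: Hs.
by apply: Hs; apply: contra jm => H; apply/mapP; exists (j - sh); rewrite ?subrK.
Qed.

Lemma fs_liftE F (f : FS V I) : fsupp_pred I (F (val f)) -> val (fs_lift F f) = F (val f).
Proof. by move=> H; rewrite /fs_lift insubdK. Qed.

Lemma fs_lift_pointwiseE (T : V -> V) (f : FS V I) : linear T ->
  val (fs_lift (fun f j => T (f j)) f) = fun j => T (val f j).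
Proof.
move=> TL; apply: fs_liftE; apply: (fsupp_shift (sh := 0) (valP f)).
  by move=> j -> _; rewrite (lin0 TL).
by move=> j nI; rewrite ((fs_support f).2 j nI) (lin0 TL).
Qed.

Lemma fs_lift_scal (T : V -> V) k (f : FS V I) : (forall u, T u = k *: u) ->
  fs_lift (fun f j => T (f j)) f = k *: f.
Proof.
move=> Tk; rewrite /fs_lift (_ : (fun j => _) = val (k *: f)) ?valKd //.
by apply: funext => j; apply: Tk.
Qed.

Definition fs_delta (j0 : int) (u : V) : FS V I := insubd 0 (fun j => if j == j0 then u else 0).

Lemma fs_deltaE j0 u : I j0 -> val (fs_delta j0 u) = fun j => if j == j0 then u else 0.
Proof.
move=> Ij0; rewrite /fs_delta insubdK //; apply/fsuppP; split.
  by exists [:: j0] => j; rewrite inE => /negbTE ->.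
by move=> j nI; case: eqP => // E; rewrite E in nI.
Qed.

Lemma fs_delta_neq0 j0 u : I j0 -> u != 0 -> fs_delta j0 u != 0.
Proof.
move=> Ij0 u0; apply: contra_neq u0 => E.
have := congr1 (fun f => val f j0) E.
by rewrite /= fs_deltaE // eqxx.
Qed.

End FinSuppTheory.

Section TensorActions.
Variables (V : lmodType C) (a : Dact V) (Ha : is_Dmodule a) (al be ga : C).

Lemma tensA_dopE m (f : FS V allI) : val (dop (tensA a al be ga) m f) = fun j =>
  dop a m (val f j) + (al + be * m%:~R - (j - 2 * m)%:~R / 2%:R) *: val f (j - 2 * m).
Proof.
apply: fs_liftE; apply: (fsupp_shift (sh := 2 * m) (valP f)) => [j -> ->|j /(_ I) []].
by rewrite (lin0 (dop_linear Ha m)) scaler0 addr0.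
Qed.

Lemma tensA_hopE k (f : FS V allI) : val (hop (tensA a al be ga) k f) = fun j =>
  hop a k (val f j) + (if oddz (j - (2 * k + 1)) then ga else 1) *: val f (j - (2 * k + 1)).
Proof.
apply: fs_liftE; apply: (fsupp_shift (sh := 2 * k + 1) (valP f)) => [j -> ->|j /(_ I) []].
by rewrite (lin0 (hop_linear Ha k)) scaler0 addr0.
Qed.

Lemma tensA'_dopE m (f : FS V (idxA' al be)) : val (dop (tensA' a al be) m f) = fun j =>
  dop a m (val f j) +
  (if `[< idxA' al be j >] then al + be * m%:~R - (j - m)%:~R else 0) *: val f (j - m).
Proof.
have ifZ j : (if `[< idxA' al be j >] then (al + be * m%:~R - (j - m)%:~R) *: val f (j - m)
    else 0) = (if `[< idxA' al be j >] then al + be * m%:~R - (j - m)%:~R else 0) *: val f (j - m).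
  by case: ifP; rewrite ?scale0r.
under eq_fun do rewrite -ifZ; apply: fs_liftE.
apply: (fsupp_shift (sh := m) (valP f)).
  by move=> j -> ->; rewrite (lin0 (dop_linear Ha m)) scaler0 add0r; case: ifP.
by move=> j nI; rewrite ((fs_support f).2 j nI) (lin0 (dop_linear Ha m)) add0r asboolF.
Qed.

End TensorActions.

Definition shift_map (V V1 : lmodType C) (I I1 : int -> Prop) (psi : V -> V1) (n : int)
  (mu : int -> C) (f : FS V I) : FS V1 I1 := insubd 0 (fun j => mu j *: psi (val f (j + n))).

Section ShiftMap.
Variables (V V1 : lmodType C) (I I1 : int -> Prop) (psi : V -> V1) (n : int) (mu : int -> C).
Hypotheses (psi0 : psi 0 = 0) (I_shift : forall j, I (j + n) <-> I1 j).

Lemma shift_mapE (f : FS V I) :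
  val (shift_map I1 psi n mu f) = fun j => mu j *: psi (val f (j + n)).
Proof.
rewrite /shift_map insubdK //; apply/fsuppP; split.
  have [[s Hs] _] := fs_support f.
  exists [seq x - n | x <- s] => j jn; rewrite Hs ?psi0 ?scaler0 //.
  by apply: contra jn => js; apply/mapP; exists (j + n); rewrite ?addrK.
move=> j nI1; have nI : ~ I (j + n) by move/I_shift.
by rewrite ((fs_support f).2 _ nI) psi0 scaler0.
Qed.

End ShiftMap.

Section ShiftIso.
Variables (V V1 : lmodType C) (psi : V -> V1) (psiL : linear psi) (psi_bij : bijective psi).
Variables (I I1 : int -> Prop) (n : int) (mu : int -> C).
Hypotheses (I_shift : forall j, I (j + n) <-> I1 j) (mu_neq0 : forall j, I1 j -> mu j != 0).

Let psi0 := lin0 psiL.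
Let sE := shift_mapE mu psi0 I_shift.
Let Phi := @shift_map V V1 I I1 psi n mu.

Lemma shift_map_linear : linear Phi.
Proof.
move=> k f g; apply: fs_ext => j; rewrite sE.
by rewrite /= (linD psiL) (linZ psiL) scalerDr scalerA mulrC -scalerA -!(congr1 (@^~ j) (sE _)).
Qed.

Lemma shift_map_bij : bijective Phi.
Proof.
case: psi_bij => psi' psiK psiK'.
have psi'0 : psi' 0 = 0 by rewrite -psi0 psiK.
have I_shift' j : I1 (j + - n) <-> I j by rewrite -[in X in _ <-> X](subrK n j) I_shift.
have s'E := shift_mapE (fun j => (mu (j - n))^-1) psi'0 I_shift'.
exists (shift_map I psi' (- n) (fun j => (mu (j - n))^-1)) => f; apply: fs_ext => j.
- rewrite s'E sE /= subrK.
  have [Ij|nIj] := pselect (I j); last first.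
    by rewrite ((fs_support f).2 _ nIj) psi0 scaler0 psi'0 scaler0.
  have I1j : I1 (j - n) by rewrite -I_shift subrK.
  by rewrite -(linZ psiL) psiK scalerA mulVf ?scale1r // mu_neq0.
- rewrite sE s'E /= addrK.
  have [I1j|nI1j] := pselect (I1 j); last first.
    by rewrite ((fs_support f).2 _ nI1j) psi'0 scaler0 psi0 scaler0.
  by rewrite (linZ psiL) psiK' scalerA divff ?scale1r // mu_neq0.
Qed.

End ShiftIso.

Lemma oddzD (j k : int) : oddz (j + k) = oddz j (+) oddz k.
Proof.
rewrite /oddz; case: (boolP (odd `|j|%N)); case: (boolP (odd `|k|%N));
  case: (boolP (odd `|(j + k)%R|%N)) => /=; lia.
Qed.

Lemma oddzN (j : int) : oddz (- j) = oddz j.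
Proof. by rewrite /oddz abszN. Qed.

Lemma oddz_double (m : int) : oddz (2 * m) = false.
Proof. by rewrite /oddz; case: (boolP (odd `|(2 * m)%R|%N)) => //=; lia. Qed.

Lemma oddz_double_add1 (k : int) : oddz (2 * k + 1) = true.
Proof. by rewrite oddzD oddz_double. Qed.

Section TensorShiftIso.
Variables (V V1 : lmodType C) (a : Dact V) (a1 : Dact V1).
Hypotheses (Ha : is_Dmodule a) (Ha1 : is_Dmodule a1).
Variables (psi : V -> V1) (psi_hom : is_Dhom a a1 psi) (psi_bij : bijective psi).
Variables (n : int) (mu : int -> C).

Let psiL : linear psi. Proof. by case: psi_hom. Qed.
Let psi0 := lin0 psiL.

Lemma tensA'_shift_iso al be al1 be1 :
  (forall j, idxA' al be (j + n) <-> idxA' al1 be1 j) ->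
  (forall j, idxA' al1 be1 j -> mu j != 0) ->
  (forall m j, idxA' al1 be1 j -> idxA' al1 be1 (j - m) ->
     mu j * (al + be * m%:~R - (j + n - m)%:~R) =
     mu (j - m) * (al1 + be1 * m%:~R - (j - m)%:~R)) ->
  Diso (tensA' a al be) (tensA' a1 al1 be1).
Proof.
move=> I_shift mu_neq0 coef; have [_ D H Cc Ll] := psi_hom.
have sE := shift_mapE mu psi0 I_shift.
apply/DisoP; exists (shift_map (idxA' al1 be1) psi n mu); last exact: shift_map_bij.
split; first exact: shift_map_linear.
- move=> m f; apply: fs_ext => j; rewrite sE (tensA'_dopE Ha) (tensA'_dopE Ha1) sE /=.
  have [Ij|nIj] := pselect (idxA' al1 be1 j); last first.
    have nIjn : ~ idxA' al be (j + n) by move/I_shift.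
    rewrite !asboolF // ((fs_support f).2 _ nIjn) !scale0r !addr0 (lin0 (dop_linear Ha m)).
    by rewrite psi0 scaler0 (lin0 (dop_linear Ha1 m)).
  have Ijn : idxA' al be (j + n) by apply/I_shift.
  rewrite !asboolT // (linD psiL) D (linZ (dop_linear Ha1 m)) (linZ psiL) scalerDr !scalerA.
  congr (_ + _); rewrite [j - m + n]addrAC.
  have [Ijm|nIjm] := pselect (idxA' al1 be1 (j - m)); first by rewrite coef // mulrC.
  have nIjnm : ~ idxA' al be (j + n - m) by rewrite addrAC; move/I_shift.
  by rewrite ((fs_support f).2 _ nIjnm) psi0 !scaler0.
- move=> k f; apply: fs_ext => j; rewrite sE (fs_lift_pointwiseE _ (hop_linear Ha k)).
  rewrite (fs_lift_pointwiseE _ (hop_linear Ha1 k)) sE /=.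
  by rewrite H (linZ (hop_linear Ha1 k)).
- move=> f; apply: fs_ext => j; rewrite sE (fs_lift_pointwiseE _ (cop_linear Ha)).
  rewrite (fs_lift_pointwiseE _ (cop_linear Ha1)) sE /=.
  by rewrite Cc (linZ (cop_linear Ha1)).
- move=> f; apply: fs_ext => j; rewrite sE (fs_lift_pointwiseE _ (lop_linear Ha)).
  rewrite (fs_lift_pointwiseE _ (lop_linear Ha1)) sE /=.
  by rewrite Ll (linZ (lop_linear Ha1)).
Qed.

Lemma tensA_shift_iso al be ga al1 be1 ga1 :
  (forall j, mu j != 0) ->
  (forall m j, mu j * (al + be * m%:~R - (j + n - 2 * m)%:~R / 2%:R) =
     mu (j - 2 * m) * (al1 + be1 * m%:~R - (j - 2 * m)%:~R / 2%:R)) ->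
  (forall k j, mu j * (if oddz (j + n - (2 * k + 1)) then ga else 1) =
     mu (j - (2 * k + 1)) * (if oddz (j - (2 * k + 1)) then ga1 else 1)) ->
  Diso (tensA a al be ga) (tensA a1 al1 be1 ga1).
Proof.
move=> mu_neq0 dcoef hcoef; have [_ D H Cc Ll] := psi_hom.
have I_shift j : allI (j + n) <-> allI j by [].
have sE := shift_mapE mu psi0 I_shift.
apply/DisoP; exists (shift_map allI psi n mu); last exact: shift_map_bij.
split; first exact: shift_map_linear.
- move=> m f; apply: fs_ext => j; rewrite sE (tensA_dopE Ha) (tensA_dopE Ha1) sE /=.
  rewrite (linD psiL) D (linZ (dop_linear Ha1 m)) (linZ psiL) scalerDr !scalerA.
  by congr (_ + _); rewrite [j - 2 * m + n]addrAC dcoef mulrC.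
- move=> k f; apply: fs_ext => j; rewrite sE (tensA_hopE Ha) (tensA_hopE Ha1) sE /=.
  rewrite (linD psiL) H (linZ (hop_linear Ha1 k)) (linZ psiL) scalerDr !scalerA.
  by congr (_ + _); rewrite [j - (2 * k + 1) + n]addrAC hcoef mulrC.
- move=> f; apply: fs_ext => j; rewrite sE (fs_lift_pointwiseE _ (cop_linear Ha)).
  rewrite (fs_lift_pointwiseE _ (cop_linear Ha1)) sE /=.
  by rewrite Cc (linZ (cop_linear Ha1)).
- move=> f; apply: fs_ext => j; rewrite sE (fs_lift_pointwiseE _ (lop_linear Ha)).
  rewrite (fs_lift_pointwiseE _ (lop_linear Ha1)) sE /=.
  by rewrite Ll (linZ (lop_linear Ha1)).
Qed.

End TensorShiftIso.

Lemma Diso_tensA' (V V1 : lmodType C) (a : Dact V) (a1 : Dact V1) c h l al be al1 be1 (n : int) :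
  is_L a c h l -> is_L a1 c h l -> al - al1 = n%:~R ->
  be = be1 \/ (be = 0 /\ be1 = -1) \/ (be = -1 /\ be1 = 0) ->
  Diso (tensA' a al be) (tensA' a1 al1 be1).
Proof.
move=> La La1 Hn Hbe.
wlog {Hbe} Hbe : V V1 a a1 La La1 al be al1 be1 n Hn / be = be1 \/ (be = 0 /\ be1 = -1).
  move=> gen; case: Hbe => [E|[E|E]]; first exact: gen La La1 _ _ _ _ _ Hn (or_introl E).
    exact: gen La La1 _ _ _ _ _ Hn (or_intror E).
  apply/Diso_sym/(gen _ _ _ _ La1 La _ _ _ _ (- n)); last by right; case: E.
  by rewrite intrN -Hn opprB.
have [psi psi_hom psi_bij] := is_L_iso La La1.
have [[Ha _ _] [Ha1 _ _]] := (La, La1).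
have Hal : al = al1 + n%:~R by rewrite -Hn addrC subrK.
have al_shift j : al = (j + n)%:~R <-> al1 = j%:~R.
  by rewrite Hal intrD; split=> [/addIr|->].
case: Hbe => [<-|[-> ->]].
- apply: (tensA'_shift_iso Ha Ha1 psi_hom psi_bij (mu := fun _ => 1)).
  + by move=> j; split=> H [E1 E2]; apply: H; split=> //; apply/al_shift.
  + by move=> j _; rewrite oner_eq0.
  + by move=> m j _ _; rewrite Hal !intrB !intrD; ring.
(* rescaling [v_j] by [al1 - j] intertwines [A'(al, 0)] with [A'(al1, -1)] *)
- apply: (tensA'_shift_iso Ha Ha1 psi_hom psi_bij (mu := fun j => al1 - j%:~R)).
  + by move=> j; split=> H [E _]; apply: H; split; [apply/al_shift|left|apply/al_shift|right].
  + by move=> j Ij; rewrite subr_eq0; apply/eqP => E; apply: Ij; split; last right.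
  + by move=> m j _ _; rewrite Hal !intrB !intrD; ring.
Qed.

Lemma Diso_tensA (V V1 : lmodType C) (a : Dact V) (a1 : Dact V1) c h l al be ga al1 (n : int) :
  ga != 0 -> is_L a c h l -> is_L a1 c h l -> al - al1 = n%:~R / 2%:R ->
  Diso (tensA a al be ga) (tensA a1 al1 be ga).
Proof.
move=> ga0 La La1 Hn.
have [psi psi_hom psi_bij] := is_L_iso La La1.
have [[Ha _ _] [Ha1 _ _]] := (La, La1).
have Hal : al = al1 + n%:~R / 2%:R by rewrite -Hn addrC subrK.
(* an odd shift of the index exchanges integral and half-integral basis vectors, so the
   factor [ga] of [h_r] has to be moved from one parity class to the other *)
apply: (tensA_shift_iso Ha Ha1 psi_hom psi_bij (n := n)
   (mu := fun j => if oddz n && ~~ oddz j then ga else 1)).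
- by move=> j; case: ifP; rewrite ?oner_eq0.
- move=> m j; rewrite oddzD oddzN oddz_double addbF; congr (_ * _).
  by rewrite Hal !intrB !intrD intrM; field.
- move=> k j; rewrite !oddzD !oddzN oddz_double_add1.
  by case: (oddz j); case: (oddz n); rewrite /= ?mulr1 ?mul1r.
Qed.

Lemma is_L_fs_restricted (V : lmodType C) (a : Dact V) c h l I (f : FS V I) :
  is_L a c h l -> exists2 N : int, 0 <= N &
    forall n, N <= n -> forall j, dop a n (val f j) = 0 /\ hop a n (val f j) = 0.
Proof.
case=> Ha Ia [v Hv]; have [[s Hs] _] := fs_support f.
suff [N N0 HN] : exists2 N : int, 0 <= N & forall n, N <= n ->
    forall j, j \in s -> dop a n (val f j) = 0 /\ hop a n (val f j) = 0.
  exists N => // n Nn j; have [js|njs] := boolP (j \in s); first exact: HN.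
  by rewrite Hs // (lin0 (dop_linear Ha n)) (lin0 (hop_linear Ha n)).
elim: s {Hs} => [|x s [N N0 HN]]; first by exists 0.
have [M M0 HM] := irr_restricted Ha Ia Hv (val f x).
exists (N + M) => [|n Hn j]; first lia.
by rewrite inE => /orP[/eqP->|js]; [apply: HM|apply: HN] => //; lia.
Qed.

Lemma is_L_tens_central (V : lmodType C) (a : Dact V) c h l I (f : FS V I) : is_L a c h l ->
  fs_lift (fun f j => cop a (f j)) f = c *: f /\ fs_lift (fun f j => lop a (f j)) f = l *: f.
Proof.
case=> Ha Ia [v Hv].
by split; apply: fs_lift_scal; [exact: (irr_cop Ha Ia Hv)|exact: (irr_lop Ha Ia Hv)].
Qed.

(* [h_N] shifts the index of [A], so it cannot kill [v (x) v_0]; on [L1 (x) A'^D] it acts through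
   [L1] alone, so it kills any given vector once [N] is large. *)
Lemma tensA_tensA'_not_Diso (V V1 : lmodType C) (a : Dact V) (a1 : Dact V1)
    c h l c1 h1 l1 al be ga al1 be1 :
  is_L a c h l -> is_L a1 c1 h1 l1 -> ~ Diso (tensA a al be ga) (tensA' a1 al1 be1).
Proof.
case=> Ha _ [v Hv] La1 /DisoP [phi [phiL _ H _ _] [phi' phiK _]].
pose f0 := fs_delta allI 0 v.
have [N N0 HN] := is_L_fs_restricted (phi f0) La1.
have hN0 : hop (tensA a al be ga) N f0 = 0.
  apply: (can_inj phiK); rewrite H (lin0 phiL); apply: fs_ext => j.
  by case: La1 => Ha1 _ _; rewrite (fs_lift_pointwiseE _ (hop_linear Ha1 N)) (HN N _ j).2.
have : val (hop (tensA a al be ga) N f0) (2 * N + 1) = 0 by rewrite hN0.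
rewrite (tensA_hopE Ha) fs_deltaE // subrr eqxx ifF; last lia.
rewrite (lin0 (hop_linear Ha N)) add0r scale1r => v_eq0.
by case: Hv => /eqP.
Qed.

Section HighestWeightDelta.
Variables (V : lmodType C) (a : Dact V) (Ha : is_Dmodule a).
Variables (c h l : C) (v : V) (Hv : hw_vector a c h l v).
Variables (I : int -> Prop) (j0 : int) (Ij0 : I j0).

Lemma hw_delta_dop m j : 0 < m -> dop a m (val (fs_delta I j0 v) j) = 0.
Proof.
move=> m0; rewrite fs_deltaE //; case: eqP => _; last exact: (lin0 (dop_linear Ha m)).
by case: Hv => _ _ _ _ [-> //].
Qed.

Lemma hw_delta_hop k j : 0 <= k -> hop a k (val (fs_delta I j0 v) j) = 0.
Proof.
move=> k0; rewrite fs_deltaE //; case: eqP => _; last exact: (lin0 (hop_linear Ha k)).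
by case: Hv => _ _ _ _ [_ ->].
Qed.

End HighestWeightDelta.

Section TensAHighestWeight.
Variables (V : lmodType C) (a : Dact V) (Ha : is_Dmodule a).
Variables (c h l al be ga : C) (v : V) (Hv : hw_vector a c h l v) (j0 : int).

Let M := tensA a al be ga.
Let f0 := fs_delta allI j0 v.
Let A := al - j0%:~R / 2%:R.
Let f0_dop := hw_delta_dop Ha Hv (I := allI) (j0 := j0) Logic.I.
Let f0_hop := hw_delta_hop Ha Hv (I := allI) (j0 := j0) Logic.I.

Lemma hw_tensA_dop_hop m k : 0 < m -> 0 <= k ->
  dop M m (hop M k f0) = (A - Defs.half k + be * m%:~R) *: hop M (k + m) f0.
Proof.
move=> m0 k0; apply: fs_ext => j.
rewrite fs_valZ (tensA_dopE Ha) !(tensA_hopE Ha) /=.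
have km0 : 0 <= k + m by lia.
rewrite !f0_hop // !add0r (linZ (dop_linear Ha m)).
rewrite f0_dop // scaler0 add0r !scalerA.
have -> : j - 2 * m - (2 * k + 1) = j - (2 * (k + m) + 1) by ring.
rewrite fs_deltaE //; case: eqP => E; last by rewrite !scaler0.
have -> : j = j0 + (2 * (k + m) + 1) by lia.
congr (_ *: _); congr (_ * _).
by rewrite /A /Defs.half !intrB !intrD !intrM; field.
Qed.

Lemma hw_tensA_hop_hop k k' : 0 <= k -> 0 <= k' ->
  (A + be * (k + k' + 1)%:~R) *: hop M k (hop M k' f0) = ga *: dop M (k + k' + 1) f0.
Proof.
move=> k0 k'0; apply: fs_ext => j.
rewrite !fs_valZ (tensA_dopE Ha) !(tensA_hopE Ha) /=.
rewrite !f0_hop // !add0r (linZ (hop_linear Ha k)) f0_hop // scaler0 add0r.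
rewrite f0_dop ?add0r; last lia.
rewrite !scalerA; have -> : j - (2 * k + 1) - (2 * k' + 1) = j - 2 * (k + k' + 1) by ring.
rewrite fs_deltaE //; case: eqP => E; last by rewrite !scaler0.
have -> : j = j0 + 2 * (k + k' + 1) by lia.
have -> : j0 + 2 * (k + k' + 1) - 2 * (k + k' + 1) = j0 by ring.
rewrite !oddzD oddzN oddz_double oddz_double_add1 addbF addbT.
by congr (_ *: _); rewrite /A; case: (oddz j0) => /=; ring.
Qed.

Lemma hw_tensA_dop0 : dop M 0 f0 = (h + A) *: f0.
Proof.
apply: fs_ext => j; rewrite fs_valZ (tensA_dopE Ha) /= mulr0 subr0.
rewrite fs_deltaE //; case: eqP => [->|_]; last by rewrite (lin0 (dop_linear Ha 0)) !scaler0 addr0.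
by case: Hv => _ -> _ _ _; rewrite -scalerDl /A; congr (_ *: _); ring.
Qed.

End TensAHighestWeight.

Section TensAIsoInvariants.
Variables (V V1 : lmodType C) (a : Dact V) (a1 : Dact V1).
Variables (c h l c1 h1 l1 al be ga al1 be1 ga1 : C).
Hypotheses (Ha : is_Dmodule a) (Ha1 : is_Dmodule a1) (Ia1 : irreducible_Dmod a1).
Variables (v : V) (v1 : V1).
Hypotheses (Hv : hw_vector a c h l v) (Hv1 : hw_vector a1 c1 h1 l1 v1) (ga1_neq0 : ga1 != 0).
Variables (phi : FS V allI -> FS V1 allI) (j0 j1 N : int).
Hypothesis phi_hom : is_Dhom (tensA a al be ga) (tensA a1 al1 be1 ga1) phi.

Let M1 := tensA a1 al1 be1 ga1.
Let A := al - j0%:~R / 2%:R.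
Let g := phi (fs_delta allI j0 v).
Let a' := al1 - j1%:~R / 2%:R.

Hypotheses (A_neq0 : A != 0) (g_j1 : val g j1 != 0) (N_ge0 : 0 <= N).
Hypothesis g_restricted :
  forall n, N <= n -> forall j, dop a1 n (val g j) = 0 /\ hop a1 n (val g j) = 0.

Let phiL : linear phi. Proof. by case: phi_hom. Qed.

Let g_dop_hop m k : 0 < m -> 0 <= k ->
  dop M1 m (hop M1 k g) = (A - Defs.half k + be * m%:~R) *: hop M1 (k + m) g.
Proof.
case: phi_hom => _ D H _ _ m0 k0.
by rewrite /g -H -D (hw_tensA_dop_hop Ha _ _ _ Hv) // (linZ phiL) H.
Qed.

Let g_hop_hop k k' : 0 <= k -> 0 <= k' ->
  (A + be * (k + k' + 1)%:~R) *: hop M1 k (hop M1 k' g) = ga *: dop M1 (k + k' + 1) g.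
Proof.
case: phi_hom => _ D H _ _ k0 k'0.
by rewrite /g -!H -(linZ phiL) (hw_tensA_hop_hop Ha _ _ _ Hv) // (linZ phiL) D.
Qed.

Let hop_g k j : N <= k ->
  val (hop M1 k g) j = (if oddz (j - (2 * k + 1)) then ga1 else 1) *: val g (j - (2 * k + 1)).
Proof. by move=> Nk; rewrite (tensA_hopE Ha1) /= (g_restricted Nk j).2 add0r. Qed.

(* Read [g_dop_hop m N] at the index [j1 + 2 (N + m) + 1], where only the [A] factor acts. *)
Lemma tensA_iso_shift : a' = A /\ be1 = be.
Proof.
have sc_neq0 : (if oddz j1 then ga1 else 1) != 0 by case: ifP; rewrite ?oner_eq0.
suff /poly1_eventually0 [/eqP + /eqP] : forall m, N + 1 <= m -> (a' - A) + (be1 - be) * m%:~R = 0.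
  by rewrite !subr_eq0 => /eqP-> /eqP->.
move=> m Nm; have Nm' : N <= m by lia.
have : val (dop M1 m (hop M1 N g)) (j1 + (2 * (N + m) + 1)) =
       val ((A - Defs.half N + be * m%:~R) *: hop M1 (N + m) g) (j1 + (2 * (N + m) + 1)).
  by rewrite g_dop_hop //; lia.
rewrite fs_valZ (tensA_dopE Ha1) /= !hop_g; try lia.
rewrite (linZ (dop_linear Ha1 m)) (g_restricted Nm' _).1 scaler0 add0r !scalerA.
have -> : j1 + (2 * (N + m) + 1) - 2 * m - (2 * N + 1) = j1 by ring.
have -> : j1 + (2 * (N + m) + 1) - (2 * (N + m) + 1) = j1 by ring.
move=> /(scaler_cancel g_j1) /(mulIf sc_neq0) /eqP; rewrite -subr_eq0 => /eqP <-.
by rewrite /a' /A /Defs.half !(intrB, intrD, intrM); field.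
Qed.

(* Read [g_hop_hop k N] at the index [j1 + 2 (k + N + 1)]. *)
Lemma tensA_iso_gamma : ga = ga1.
Proof.
have [a'A be1E] := tensA_iso_shift.
suff E k : N <= k -> (A + be * (k + N + 1)%:~R) * (ga1 - ga) = 0.
  apply/eqP; apply: contraT => ne.
  have /poly1_eventually0 [A0 be0] : forall k, N <= k -> (A + be * (N + 1)%:~R) + be * k%:~R = 0.
    move=> k Nk; move/eqP: (E k Nk); rewrite mulf_eq0 subr_eq0 [ga1 == _]eq_sym (negbTE ne) orbF.
    by move=> /eqP <-; rewrite !intrD; ring.
  by move: A0; rewrite be0 mul0r addr0 => /eqP; rewrite (negbTE A_neq0).
move=> Nk; have NK : N <= k + N + 1 by lia.
have : val ((A + be * (k + N + 1)%:~R) *: hop M1 k (hop M1 N g)) (j1 + 2 * (k + N + 1)) =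
       val (ga *: dop M1 (k + N + 1) g) (j1 + 2 * (k + N + 1))
  by rewrite g_hop_hop //; lia.
rewrite !fs_valZ (tensA_hopE Ha1) (tensA_dopE Ha1) /= !hop_g //.
rewrite (linZ (hop_linear Ha1 k)) (g_restricted Nk _).2 (g_restricted NK _).1 scaler0 !add0r.
have -> : j1 + 2 * (k + N + 1) - (2 * k + 1) = j1 + (2 * N + 1) by ring.
have -> : j1 + 2 * (k + N + 1) - 2 * (k + N + 1) = j1 by ring.
rewrite addrK !scalerA oddzD oddz_double_add1 => /(scaler_cancel g_j1).
have -> : (if oddz j1 (+) true then ga1 else 1) * (if oddz j1 then ga1 else 1) = ga1.
  by case: (oddz j1); rewrite /= ?mulr1 ?mul1r.
have -> : al1 + be1 * (k + N + 1)%:~R - j1%:~R / 2%:R = A + be * (k + N + 1)%:~R.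
  by rewrite -a'A be1E /a'; ring.
by move=> E; rewrite mulrBr E; ring.
Qed.

Lemma tensA_iso_weight : exists j : nat, h = h1 + j%:R / 2%:R.
Proof.
have [a'A _] := tensA_iso_shift.
have : val (dop M1 0 g) j1 = val ((h + A) *: g) j1.
  by case: phi_hom => _ D _ _ _; rewrite /g -D (hw_tensA_dop0 Ha _ _ _ Hv) (linZ phiL).
rewrite fs_valZ (tensA_dopE Ha1) /= mulr0 subr0 => E.
apply: (irr_weight Ha1 Ia1 Hv1 g_j1); apply: (addIr (a' *: val g j1)).
rewrite -scalerDl [in RHS]a'A -E; congr (_ + _ *: _).
by rewrite /a'; ring.
Qed.

End TensAIsoInvariants.

Lemma Diso_tensA_params (V V1 : lmodType C) (a : Dact V) (a1 : Dact V1)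
    c h l c1 h1 l1 al be ga al1 be1 ga1 :
  ga1 != 0 -> is_L a c h l -> is_L a1 c1 h1 l1 ->
  Diso (tensA a al be ga) (tensA a1 al1 be1 ga1) ->
  [/\ be = be1, ga = ga1, c = c1, l = l1 &
      (exists n : int, al - al1 = n%:~R / 2%:R) /\ exists j : nat, h = h1 + j%:R / 2%:R].
Proof.
move=> ga1_neq0 La La1 /DisoP [phi phi_hom phi_bij].
have [[Ha _ [v Hv]] [Ha1 Ia1 [v1 Hv1]]] := (La, La1).
pose j0 : int := if al == 0 then 1 else 0.
have A_neq0 : al - j0%:~R / 2%:R != 0.
  rewrite /j0; case: (eqVneq al 0) => [->|]; last by rewrite mul0r subr0.
  by rewrite sub0r oppr_eq0 mul1r invr_eq0 pnatr_eq0.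
pose g := phi (fs_delta allI j0 v).
have g_neq0 : g != 0.
  by apply: (Dhom_neq0 phi_hom (bij_inj phi_bij)); apply: fs_delta_neq0 => //; case: Hv.
have [j1 g_j1] := fs_neq0 g_neq0.
have [N N_ge0 g_restricted] := is_L_fs_restricted g La1.
have [a'A <-] := tensA_iso_shift Ha Ha1 Hv ga1_neq0 phi_hom A_neq0 g_j1 N_ge0 g_restricted.
have [<- <-] := Dhom_central_eq phi_hom g_neq0
  (fun f => (is_L_tens_central f La).1) (fun f => (is_L_tens_central f La1).1)
  (fun f => (is_L_tens_central f La).2) (fun f => (is_L_tens_central f La1).2).
split=> //.
  exact: (tensA_iso_gamma Ha Ha1 Hv ga1_neq0 phi_hom A_neq0 g_j1 N_ge0 g_restricted).
split; last exact: (tensA_iso_weight Ha Ha1 Ia1 Hv Hv1 ga1_neq0 phi_hom A_neq0 g_j1 N_ge0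
  g_restricted).
exists (j0 - j1); have -> : al1 = al - j0%:~R / 2%:R + j1%:~R / 2%:R by rewrite -a'A subrK.
by rewrite intrB; ring.
Qed.

Section TensA'HighestWeight.
Variables (V : lmodType C) (a : Dact V) (Ha : is_Dmodule a).
Variables (c h l al be : C) (v : V) (Hv : hw_vector a c h l v) (j0 : int).
Hypothesis j0_idx : forall n, 0 <= n -> idxA' al be (j0 + n).

Let M := tensA' a al be.
Let f0 := fs_delta (idxA' al be) j0 v.
Let A := al - j0%:~R.
Let Ij0 : idxA' al be j0. Proof. by have := j0_idx (lexx 0); rewrite addr0. Qed.
Let f0_dop := hw_delta_dop Ha Hv Ij0.

Lemma hw_tensA'_dop_dop m n : 0 < m -> 0 < n ->
  (A + be * (m + n)%:~R) *: dop M m (dop M n f0) =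
  ((A + be * n%:~R) * (A - n%:~R + be * m%:~R)) *: dop M (m + n) f0.
Proof.
move=> m0 n0; apply: fs_ext => j; have mn0 : 0 < m + n by lia.
rewrite !fs_valZ !(tensA'_dopE Ha) /= !f0_dop // !add0r (linZ (dop_linear Ha m)) f0_dop //.
rewrite scaler0 add0r !scalerA; have -> : j - m - n = j - (m + n) by ring.
rewrite fs_deltaE //; case: eqP => E; last by rewrite !scaler0.
have -> : j = j0 + (m + n) by lia.
have -> : j0 + (m + n) - m = j0 + n by ring.
rewrite !asboolT; try by apply: j0_idx; lia.
by congr (_ *: _); rewrite /A !(intrB, intrD); ring.
Qed.

Lemma hw_tensA'_dop0 : dop M 0 f0 = (h + A) *: f0.
Proof.
apply: fs_ext => j; rewrite fs_valZ (tensA'_dopE Ha) /= subr0.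
rewrite fs_deltaE //; case: eqP => [->|_]; last by rewrite (lin0 (dop_linear Ha 0)) !scaler0 addr0.
by case: Hv => _ -> _ _ _; rewrite asboolT // -scalerDl /A; congr (_ *: _); ring.
Qed.

End TensA'HighestWeight.

Section TensA'IsoInvariants.
Variables (V V1 : lmodType C) (a : Dact V) (a1 : Dact V1).
Variables (c h l c1 h1 l1 al be al1 be1 : C).
Hypotheses (Ha : is_Dmodule a) (Ha1 : is_Dmodule a1) (Ia1 : irreducible_Dmod a1).
Variables (v : V) (v1 : V1).
Hypotheses (Hv : hw_vector a c h l v) (Hv1 : hw_vector a1 c1 h1 l1 v1).
Variables (phi : FS V (idxA' al be) -> FS V1 (idxA' al1 be1)) (j0 j1 N : int).
Hypothesis phi_hom : is_Dhom (tensA' a al be) (tensA' a1 al1 be1) phi.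
Hypothesis j0_idx : forall n, 0 <= n -> idxA' al be (j0 + n).

Let M1 := tensA' a1 al1 be1.
Let A := al - j0%:~R.
Let g := phi (fs_delta (idxA' al be) j0 v).
Let a' := al1 - j1%:~R.

Hypotheses (A_neq0 : A != 0) (g_j1 : val g j1 != 0) (N_gt0 : 0 < N).
Hypothesis g_restricted :
  forall n, N <= n -> forall j, dop a1 n (val g j) = 0 /\ hop a1 n (val g j) = 0.
Hypothesis j1_idx : forall n, N <= n -> idxA' al1 be1 (j1 + n).

Let phiL : linear phi. Proof. by case: phi_hom. Qed.

Let g_dop_dop m n : 0 < m -> 0 < n ->
  (A + be * (m + n)%:~R) *: dop M1 m (dop M1 n g) =
  ((A + be * n%:~R) * (A - n%:~R + be * m%:~R)) *: dop M1 (m + n) g.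
Proof.
case: phi_hom => _ D _ _ _ m0 n0.
by rewrite /g -!D -(linZ phiL) (hw_tensA'_dop_dop Ha Hv j0_idx) // (linZ phiL) D.
Qed.

Let dop_g n j : N <= n -> val (dop M1 n g) j =
  (if `[< idxA' al1 be1 j >] then al1 + be1 * n%:~R - (j - n)%:~R else 0) *: val g (j - n).
Proof. by move=> Nn; rewrite (tensA'_dopE Ha1) /= (g_restricted Nn j).1 add0r. Qed.

(* Read [g_dop_dop m n] at the index [j1 + m + n]. *)
Lemma tensA'_iso_poly m n : N <= m -> N <= n ->
  (A + be * (m%:~R + n%:~R)) * ((a' - n%:~R + be1 * m%:~R) * (a' + be1 * n%:~R)) =
  ((A + be * n%:~R) * (A - n%:~R + be * m%:~R)) * (a' + be1 * (m%:~R + n%:~R)).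
Proof.
move=> Nm Nn.
have : val ((A + be * (m + n)%:~R) *: dop M1 m (dop M1 n g)) (j1 + (m + n)) =
       val (((A + be * n%:~R) * (A - n%:~R + be * m%:~R)) *: dop M1 (m + n) g) (j1 + (m + n)).
  by rewrite g_dop_dop //; lia.
rewrite !fs_valZ (tensA'_dopE Ha1) /= !dop_g; try lia.
rewrite (linZ (dop_linear Ha1 m)) (g_restricted Nm _).1 scaler0 add0r !scalerA.
have -> : j1 + (m + n) - m = j1 + n by ring.
rewrite !addrK !asboolT; try by apply: j1_idx; lia.
move=> /(scaler_cancel g_j1) E; apply: (etrans _ (etrans E _)); rewrite /a' !(intrB, intrD); ring.
Qed.

Let Ij1 : idxA' al1 be1 j1.
Proof.
have [//|nI] := pselect (idxA' al1 be1 j1).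
by move: g_j1; rewrite ((fs_support g).2 _ nI) eqxx.
Qed.

Let poly_coefs n : N <= n ->
  [/\ (a' + be1 * n%:~R) * (A + be * n%:~R) * (a' - A) = 0,
      be1 * (A + be * n%:~R) * ((a' + be1 * n%:~R) - (A - n%:~R)) +
        be * (a' + be1 * n%:~R) * ((a' - n%:~R) - (A + be * n%:~R)) = 0 &
      be * be1 * ((a' + be1 * n%:~R) - (A + be * n%:~R)) = 0].
Proof.
move=> Nn; apply: (poly2_eventually0 (N := N)) => m Nm.
move/eqP: (tensA'_iso_poly Nm Nn); rewrite -subr_eq0 => /eqP E.
by apply: (etrans _ E); ring.
Qed.

Lemma tensA'_iso_shift : a' = A.
Proof.
apply/eqP; apply: contraT => ne.
have /poly2_eventually0 [aA0 lin _] : forall n, N <= n ->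
    a' * A + (a' * be + A * be1) * n%:~R + (be * be1) * n%:~R ^+ 2 = 0.
  move=> n Nn; have [E _ _] := poly_coefs Nn; move/eqP: E.
  by rewrite mulf_eq0 subr_eq0 (negbTE ne) orbF => /eqP E; apply: (etrans _ E); ring.
have a'0 : a' = 0 by move/eqP: aA0; rewrite mulf_eq0 (negbTE A_neq0) orbF => /eqP.
move: lin; rewrite a'0 mul0r add0r => /eqP; rewrite mulf_eq0 (negbTE A_neq0) /= => /eqP be10.
by case: Ij1; split; [apply/eqP; rewrite -subr_eq0; apply/eqP | left].
Qed.

Lemma tensA'_iso_beta : be = be1 \/ (be = 0 /\ be1 = -1) \/ (be = -1 /\ be1 = 0).
Proof.
have /poly2_eventually0 [_ R1 R2] : forall n, N <= n ->
    0 + (A * (be1 - be) * (1 + be + be1)) * n%:~R + (be * be1 * (be1 - be)) * n%:~R ^+ 2 = 0.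
  move=> n Nn; have [_ E _] := poly_coefs Nn.
  by rewrite tensA'_iso_shift in E; apply: (etrans _ E); ring.
have [->|ne] := eqVneq be1 be; [by left | right].
have s0 : 1 + be + be1 = 0.
  by move/eqP: R1; rewrite !mulf_eq0 (negbTE A_neq0) subr_eq0 (negbTE ne) => /eqP.
move/eqP: R2; rewrite !mulf_eq0 subr_eq0 (negbTE ne) orbF => /orP[/eqP b0|/eqP b10].
  by left; split=> //; move/eqP: s0; rewrite b0 addr0 addrC addr_eq0 => /eqP.
by right; split=> //; move/eqP: s0; rewrite b10 addr0 addrC addr_eq0 => /eqP.
Qed.

Lemma tensA'_iso_weight : exists j : nat, h = h1 + j%:R / 2%:R.
Proof.
have : val (dop M1 0 g) j1 = val ((h + A) *: g) j1.
  by case: phi_hom => _ D _ _ _; rewrite /g -D (hw_tensA'_dop0 Ha Hv j0_idx) (linZ phiL).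
rewrite fs_valZ (tensA'_dopE Ha1) /= subr0 asboolT // => E.
apply: (irr_weight Ha1 Ia1 Hv1 g_j1); apply: (addIr (a' *: val g j1)).
rewrite -scalerDl [in RHS]tensA'_iso_shift -E; congr (_ + _ *: _).
by rewrite /a'; ring.
Qed.

End TensA'IsoInvariants.

Lemma idxA'_base al be :
  exists j0 : int, al - j0%:~R != 0 /\ forall n, 0 <= n -> idxA' al be (j0 + n).
Proof.
have [[z [Ez _]]|Hn] := pselect (exists z : int, al = z%:~R /\ (be = 0 \/ be = -1)).
  exists (z + 1); split; first by rewrite Ez intrD opprD addrA subrr sub0r oppr_eq0 oner_eq0.
  by move=> n n0 [/eqP]; rewrite Ez eqr_int => /eqP; lia.
pose j0 : int := if al == 0 then 1 else 0.
exists j0; split; last by move=> n _ [E Hb]; apply: Hn; exists (j0 + n).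
by rewrite /j0; case: (eqVneq al 0) => [->|]; rewrite ?subr0 // sub0r oppr_eq0 oner_eq0.
Qed.

Lemma idxA'_tail al be (j : int) :
  exists2 N : int, 0 <= N & forall n, N <= n -> idxA' al be (j + n).
Proof.
have [[z [Ez _]]|Hn] := pselect (exists z : int, al = z%:~R /\ (be = 0 \/ be = -1)).
  exists (`|z - j|%N%:Z + 1) => [|n Nn [/eqP]]; first lia.
  by rewrite Ez eqr_int => /eqP; lia.
by exists 0 => // n _ [E Hb]; apply: Hn; exists (j + n).
Qed.

Lemma Diso_tensA'_params (V V1 : lmodType C) (a : Dact V) (a1 : Dact V1)
    c h l c1 h1 l1 al be al1 be1 :
  is_L a c h l -> is_L a1 c1 h1 l1 -> Diso (tensA' a al be) (tensA' a1 al1 be1) ->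
  [/\ c = c1, l = l1, (exists n : int, al - al1 = n%:~R),
      be = be1 \/ (be = 0 /\ be1 = -1) \/ (be = -1 /\ be1 = 0) &
      exists j : nat, h = h1 + j%:R / 2%:R].
Proof.
move=> La La1 /DisoP [phi phi_hom phi_bij].
have [[Ha _ [v Hv]] [Ha1 Ia1 [v1 Hv1]]] := (La, La1).
have [j0 [A_neq0 j0_idx]] := idxA'_base al be.
pose g := phi (fs_delta (idxA' al be) j0 v).
have g_neq0 : g != 0.
  apply: (Dhom_neq0 phi_hom (bij_inj phi_bij)); apply: fs_delta_neq0; last by case: Hv.
  by rewrite -(addr0 j0); apply: j0_idx.
have [j1 g_j1] := fs_neq0 g_neq0.
have [N1 N1_ge0 g_restricted] := is_L_fs_restricted g La1.
have [N2 N2_ge0 j1_idx] := idxA'_tail al1 be1 j1.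
have N_gt0 : 0 < N1 + N2 + 1 by lia.
have {}g_restricted n : N1 + N2 + 1 <= n ->
    forall j, dop a1 n (val g j) = 0 /\ hop a1 n (val g j) = 0.
  by move=> Nn; apply: g_restricted; lia.
have {}j1_idx n : N1 + N2 + 1 <= n -> idxA' al1 be1 (j1 + n).
  by move=> Nn; apply: j1_idx; lia.
have [<- <-] := Dhom_central_eq phi_hom g_neq0
  (fun f => (is_L_tens_central f La).1) (fun f => (is_L_tens_central f La1).1)
  (fun f => (is_L_tens_central f La).2) (fun f => (is_L_tens_central f La1).2).
split=> //.
- exists (j0 - j1).
  have := tensA'_iso_shift Ha Ha1 Hv phi_hom j0_idx A_neq0 g_j1 N_gt0 g_restricted j1_idx.
  by move/(canRL (subrK _)) ->; rewrite intrB; ring.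
- exact: (tensA'_iso_beta Ha Ha1 Hv phi_hom j0_idx A_neq0 g_j1 N_gt0 g_restricted j1_idx).
- exact: (tensA'_iso_weight Ha Ha1 Ia1 Hv Hv1 phi_hom j0_idx A_neq0 g_j1 N_gt0 g_restricted
    j1_idx).
Qed.

Lemma half_nat_antisym (x y : C) (j j' : nat) :
  x = y + j%:R / 2%:R -> y = x + j'%:R / 2%:R -> x = y.
Proof.
move=> E1 E2; have : (j + j')%:R / 2%:R = 0 :> C.
  by rewrite natrD mulrDl -[j%:R / _](addKr y) -E1 -[j'%:R / _](addKr x) -E2; ring.
move/eqP; rewrite mulf_eq0 invr_eq0 !pnatr_eq0 orbF addn_eq0 => /andP[/eqP j0 _].
by rewrite E1 j0 mul0r addr0.
Qed.

Theorem theorem4p4 (c h l al be c1 h1 l1 al1 be1 ga ga1 : C)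
    (V V1 : lmodType C) (a : Dact V) (a1 : Dact V1) :
  ga != 0 -> ga1 != 0 -> is_L a c h l -> is_L a1 c1 h1 l1 ->
  [/\ (Diso (tensA' a al be) (tensA' a1 al1 be1) <->
         [/\ (c, h, l) = (c1, h1, l1), (exists n : int, al - al1 = n%:~R) &
             (be = be1 \/ (be = 0 /\ be1 = -1) \/ (be = -1 /\ be1 = 0))]),
      (Diso (tensA a al be ga) (tensA a1 al1 be1 ga1) <->
         (be, ga, c, h, l) = (be1, ga1, c1, h1, l1) /\
         (exists n : int, al - al1 = n%:~R / 2%:R)) &
      ~ Diso (tensA a al be ga) (tensA' a1 al1 be1)].
Proof.
move=> ga_neq0 ga1_neq0 La La1; split.
- split=> [iso|[[E1 E2 E3] [n Hn] be_cases]].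
  (* an isomorphism only gives [h - h1] in [1/2 N]; its inverse gives [h1 - h] in [1/2 N] *)
  + have [cE lE al_int be_cases [j hj]] := Diso_tensA'_params La La1 iso.
    have [_ _ _ _ [j' hj']] := Diso_tensA'_params La1 La (Diso_sym iso).
    by rewrite cE lE (half_nat_antisym hj hj').
  + by subst; apply: Diso_tensA' La La1 Hn be_cases.
- split=> [iso|[[E1 E2 E3 E4 E5] [n Hn]]].
  + have [<- <- cE lE [al_half [j hj]]] := Diso_tensA_params ga1_neq0 La La1 iso.
    have [_ _ _ _ [_ [j' hj']]] := Diso_tensA_params ga_neq0 La1 La (Diso_sym iso).
    by rewrite cE lE (half_nat_antisym hj hj').
  + by subst; apply: Diso_tensA ga_neq0 La La1 Hn.
- exact: tensA_tensA'_not_Diso La La1.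
Qed.
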